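(* Let $m\ge 2$ and let $\mathbf A$ be the $(2m-2)\times(2m-2)$ replacement matrix defined in the context. Define the vector $\mathbf v=(v_1,\dots,v_{2m-2})^T$ by $$v_i=\frac{i}{m(m+1)(H_m-1)}\quad (1\le i\le m),\qquad v_{m+j}=\frac{1}{m(m+1)(H_m-1)}\cdot\frac{m(m+1)}{j+2}\quad (1\le j\le m-2),$$ where $H_m=\sum_{r=1}^m 1/r$. Then $\mathbf A^T\mathbf v=\mathbf v$ and $\sum_{i=1}^{2m-2}v_i=1$. Moreover the eigenvalue $1$ is the eigenvalue of $\mathbf A^T$ of largest real part, its eigenspace is one-dimensional, and $\mathbf v$ is the unique eigenvector of $\mathbf A^T$ for eigenvalue $1$ whose components sum to $1$.
   Context: Fix an integer $m\ge 2$. Rows and columns of $\mathbf A$ are indexed by $1,\dots,2m-2$; entry $A_{r,c}$ is the net number of balls of color $c$ added when a ball of color $r$ is drawn. For $m=2$, $\mathbf A=\begin{pmatrix}-1&2\\1&0\end{pmatrix}$. For $m\ge 3$, all entries of $\mathbf A$ are $0$ except: row $1$: $A_{1,1}=-1$, $A_{1,m+1}=2$; row $i$ for $2\le i\le m$: $A_{i,i}=-i$, $A_{i,i-1}=i-1$, $A_{i,m+1}=2$; row $m+i-1$ for $2\le i\le m-2$: $A_{m+i-1,m+i-1}=-i$, $A_{m+i-1,m+i}=i+1$; row $2m-2$: $A_{2m-2,2m-2}=-(m-1)$, $A_{2m-2,m}=m$. (Every row sums to $1$.) $H_m=\sum_{r=1}^m 1/r$ denotes the $m$-th harmonic numbe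r. *)

(* scalars are algC (algebraic complex numbers), since the
   spectrum of A^T may be non-real. *)
From HB Require Import structures.
From mathcomp Require Import all_boot all_order all_algebra all_field.
Set Implicit Arguments. Unset Strict Implicit. Unset Printing Implicit Defensive.
Import Order.TTheory GRing.Theory Num.Theory.
Local Open Scope ring_scope.

(* Entry A_{r,c} of the replacement matrix, with 1-based indices r, c. *)
Definition urnA_entry (m r c : nat) : algC :=
  if m == 2%N then
    (if (r == 1%N) && (c == 1%N) then -1
     else if (r == 1%N) && (c == 2%N) then 2
     else if (r == 2%N) && (c == 1%N) then 1
     else 0)
  else if r == 1%N then
    (if c == 1%N then -1 else if c == m.+1 then 2 else 0)
  else if (2 <= r <= m)%N then
    (if c == r then - (r%:R) else if c == r.-1 then (r.-1)%:R
     else if c == m.+1 then 2 else 0)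
  else if r == (2 * m - 2)%N then
    (if c == r then - ((m - 1)%N%:R) else if c == m then m%:R else 0)
  else if (m.+1 <= r <= 2 * m - 3)%N then
    (* r = m + i - 1 with 2 <= i <= m-2, i.e. i = r - m + 1 *)
    (if c == r then - ((r - m + 1)%N%:R)
     else if c == r.+1 then ((r - m + 2)%N%:R) else 0)
  else 0.

Definition urnA (m : nat) : 'M[algC]_(2 * m - 2) :=
  \matrix_(i, j) urnA_entry m i.+1 j.+1.

Definition harm (m : nat) : algC := \sum_(1 <= r < m.+1) (r%:R)^-1.

Definition urnv_entry (m k : nat) : algC :=
  let c := ((m * (m + 1))%N%:R * (harm m - 1))^-1 in
  if (k <= m)%N then c * k%:R
  else c * ((m * (m + 1))%N%:R / ((k - m + 2)%N%:R)).

Definition urnv (m : nat) : 'cV[algC]_(2 * m - 2) :=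
  \col_i urnv_entry m i.+1.

From HB Require Import structures.
From mathcomp Require Import all_boot all_order all_algebra all_field.
From mathcomp Require Import zify ring.
Import Order.TTheory GRing.Theory Num.Theory.
Local Open Scope ring_scope.

(* The replacement matrix A has real entries, nonnegative off the diagonal,
   and unit row sums. Gershgorin's theorem therefore puts every eigenvalue in
   a disc |z - A_ii| <= 1 - A_ii, which meets the half-plane Re z >= 1 only
   at 1. Solving A x = x row by row shows that the fixed vectors of A are the
   constants, so the fixed space of A, hence also that of A^T (same rank), is
   a line; the normalised fixed vector of A^T is then unique, and v is checked
   column by column, its normalisation coming from
   sum_{k=3}^m 1/k = H_m - 3/2. *)

Section SparseSums.
Context {R : nmodType} {a b : nat} {F : nat -> R}.

Lemma big_nat_sparse (S : seq nat) : uniq S ->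
  (forall k, k \in S -> (a <= k < b)%N) ->
  (forall k, (a <= k < b)%N -> k \notin S -> F k = 0) ->
  \sum_(a <= k < b) F k = \sum_(k <- S) F k.
Proof.
move=> S_uniq S_range F0.
rewrite (bigID (mem S)) /= [X in _ + X]big1_seq ?addr0; last first.
  by move=> k /andP [kS]; rewrite mem_index_iota => /F0; apply.
rewrite -big_filter; apply/perm_big/uniq_perm => //.
  exact: filter_uniq (iota_uniq _ _).
move=> k; rewrite mem_filter mem_index_iota.
by case kS : (k \in S); rewrite // S_range.
Qed.

Lemma big_nat_sparse2 k1 k2 : k1 != k2 ->
  (a <= k1 < b)%N -> (a <= k2 < b)%N ->
  (forall k, (a <= k < b)%N -> k != k1 -> k != k2 -> F k = 0) ->
  \sum_(a <= k < b) F k = F k1 + F k2.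
Proof.
move=> k12 k1_range k2_range F0; rewrite (big_nat_sparse [:: k1; k2]).
- by rewrite !big_cons big_nil addr0.
- by rewrite /= inE k12.
- by move=> k; rewrite !inE => /orP [] /eqP ->.
- by move=> k k_range; rewrite !inE negb_or => /andP []; apply: F0.
Qed.

Lemma big_nat_sparse3 k1 k2 k3 : k1 != k2 -> k1 != k3 -> k2 != k3 ->
  (a <= k1 < b)%N -> (a <= k2 < b)%N -> (a <= k3 < b)%N ->
  (forall k, (a <= k < b)%N -> k != k1 -> k != k2 -> k != k3 -> F k = 0) ->
  \sum_(a <= k < b) F k = F k1 + F k2 + F k3.
Proof.
move=> k12 k13 k23 k1_range k2_range k3_range F0.
rewrite (big_nat_sparse [:: k1; k2; k3]).
- by rewrite !big_cons big_nil addr0 addrA.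
- by rewrite /= !inE negb_or k12 k13 k23.
- by move=> k; rewrite !inE => /orP [/eqP ->|/orP [] /eqP ->].
- by move=> k k_range; rewrite !inE !negb_or => /andP [? /andP [? ?]]; apply: F0.
Qed.

End SparseSums.

Lemma big_ord_succ (R : nmodType) n (F : nat -> R) :
  \sum_(i < n) F i.+1 = \sum_(1 <= k < n.+1) F k.
Proof. by rewrite big_add1 /= big_mkord. Qed.

Lemma big_nat_two (R : nmodType) (F : nat -> R) :
  \sum_(1 <= c < 3) F c = F 1%N + F 2%N.
Proof. by rewrite big_ltn // big_ltn // big_geq // addr0. Qed.

Lemma natr_triangular_sum (R : fieldType) k : (2 : R) != 0 ->
  \sum_(1 <= r < k.+1) (r%:R : R) = (k * k.+1)%N%:R / 2.
Proof.
move=> two_neq0; elim: k => [|k IH]; first by rewrite big_geq // mul0n mul0r.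
by rewrite big_nat_recr //= IH; field.
Qed.

Lemma eq_of_scaled_residual (R : idomainType) (k x y a b : R) :
  a = b -> k != 0 -> k * (x - y) = b - a -> x = y.
Proof.
by move=> -> k_neq0 /eqP; rewrite subrr mulf_eq0 (negbTE k_neq0) subr_eq0 => /eqP.
Qed.

Section Gershgorin.
Context {C : numClosedFieldType} {n : nat} {A : 'M[C]_n}.

Lemma eigenvalue_trmx_gershgorin lam : eigenvalue A^T lam ->
  exists i, `|lam - A i i| <= \sum_(j | j != i) `|A i j|.
Proof.
move=> /eigenvalueP [u /matrixP u_eigen u_neq0].
have eigen_row i : \sum_j A i j * u 0 j = lam * u 0 i.
  by have := u_eigen 0 i; rewrite !mxE => <-; apply: eq_bigr => j _; rewrite mxE mulrC.
have [i0 ui0_neq0|u0] := pickP (fun j => u 0 j != 0); last first.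
  by case/eqP: u_neq0; apply/rowP => j; rewrite mxE; apply/eqP/negbFE/u0.
have cmp j k : `|u 0 j| >=< `|u 0 k| by apply: real_comparable; rewrite normr_real.
case: (@comparable_arg_maxP _ _ _ i0 predT (fun j => `|u 0 j|) isT
  (fun j k _ _ => cmp j k)) => i _ /= umax.
exists i.
have ui_gt0 : 0 < `|u 0 i|.
  by apply: lt_le_trans (umax i0 isT); rewrite normr_gt0.
have diag_eq : (lam - A i i) * u 0 i = \sum_(j | j != i) A i j * u 0 j.
  by rewrite mulrBl -eigen_row (bigD1 i) //= addrC addrK.
rewrite -(ler_pM2r ui_gt0) -normrM diag_eq mulr_suml.
apply: le_trans (ler_norm_sum _ _ _) _; apply: ler_sum => j _.
by rewrite normrM ler_wpM2l ?umax.
Qed.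

Lemma Re_lt1_of_disk (a z : C) : a \is Num.real ->
  `|z - a| <= 1 - a -> z != 1 -> 'Re z < 1.
Proof.
move=> a_real disk z_neq1; set w := z - a in disk.
have Re_w : 'Re w = 'Re z - a by rewrite raddfB /= (Creal_ReP _ a_real).
rewrite real_ltNge ?realn ?Creal_Re //; apply/negP => Re_z_ge1.
have Re_w_ge : 1 - a <= 'Re w by rewrite Re_w lerD2r.
have Re_w_eq : 'Re w = `|w|.
  apply/eqP; rewrite eq_le (leif_Re_Creal w).1 /=.
  exact: le_trans disk Re_w_ge.
have w_ge0 : 0 <= w by rewrite -(leif_Re_Creal w).2 Re_w_eq.
have w_real : w \is Num.real by rewrite ger0_real.
have : w = 1 - a.
  rewrite -(Creal_ReP _ w_real); apply/eqP.
  by rewrite eq_le Re_w_ge andbT Re_w_eq.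
by move/eqP; rewrite /w subr_eq subrK (negbTE z_neq1).
Qed.

End Gershgorin.

Section UnitRowSum.
Context {C : numClosedFieldType} {n : nat} {A : 'M[C]_n}.
Hypothesis A_real : forall i j, A i j \is Num.real.
Hypothesis A_offdiag_ge0 : forall i j, i != j -> 0 <= A i j.
Hypothesis A_row_sum : forall i, \sum_j A i j = 1.

Lemma eigenvalue_trmx_Re_lt1 lam : eigenvalue A^T lam -> lam != 1 -> 'Re lam < 1.
Proof.
move=> /eigenvalue_trmx_gershgorin [i disk]; apply: Re_lt1_of_disk (A_real i i) _.
have -> : 1 - A i i = \sum_(j | j != i) `|A i j|.
  rewrite -(A_row_sum i) (bigD1 i) //= addrC addrK.
  by apply: eq_bigr => j ji; rewrite ger0_norm // A_offdiag_ge0 // eq_sym.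
exact: disk.
Qed.

Lemma const_rV_mul_trmx : const_mx 1 *m A^T = const_mx 1 :> 'rV_n.
Proof.
apply/rowP => j; rewrite !mxE -[RHS](A_row_sum j).
by apply: eq_bigr => k _; rewrite !mxE mul1r.
Qed.

Hypothesis n_gt0 : (0 < n)%N.
Hypothesis A_fixed_const : forall x : 'cV[C]_n, A *m x = x -> forall i j, x i 0 = x j 0.

(* MathComp eigenspaces consist of left eigenvectors: the rows of
   [eigenspace A^T 1] are the transposed fixed vectors of A. *)
Lemma eigenspace_trmx1_const : (eigenspace A^T 1 == (const_mx 1 : 'rV_n))%MS.
Proof.
pose i0 := Ordinal n_gt0.
apply/andP; split; last first.
  by apply/eigenspaceP; rewrite const_rV_mul_trmx scale1r.
apply/row_subP => k; set u := row k _.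
have /eigenspaceP : (u <= eigenspace A^T 1)%MS by apply: row_sub.
rewrite scale1r => u_fixed.
have Au : A *m u^T = u^T by rewrite -[A]trmxK -trmx_mul u_fixed.
apply/sub_rVP; exists (u 0 i0); apply/rowP => j.
by have := A_fixed_const _ Au j i0; rewrite !mxE mulr1.
Qed.

Lemma rank_eigenspace_trmx1 : \rank (eigenspace A^T 1) = 1%N.
Proof.
rewrite (eqmx_rank eigenspace_trmx1_const) rank_rV; case: eqP => // /rowP.
by move/(_ (Ordinal n_gt0)); rewrite !mxE => /eqP; rewrite oner_eq0.
Qed.

Lemma trmx_fixed_sum1_unique (v w : 'cV[C]_n) :
  A^T *m v = v -> A^T *m w = w -> \sum_i v i 0 = 1 -> \sum_i w i 0 = 1 -> w = v.
Proof.
move=> Av Aw v_sum w_sum.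
pose L := eigenspace A 1.
have rank_L : \rank L = 1%N.
  by rewrite mxrank_ker -mxrank_tr linearB /= tr_scalar_mx -mxrank_ker
    rank_eigenspace_trmx1.
have fixed_sub (y : 'cV_n) : A^T *m y = y -> (y^T <= L)%MS.
  by move=> Ay; apply/eigenspaceP; rewrite -[A]trmxK -trmx_mul Ay scale1r.
have v_neq0 : v^T != 0.
  apply: contra_eq_neq v_sum => /(congr1 trmx); rewrite trmxK trmx0 => ->.
  by rewrite big1 1?eq_sym ?oner_eq0 // => i _; rewrite mxE.
have /andP [_ L_sub_v] : (v^T == L)%MS.
  by rewrite -(mxrank_leqif_eq (fixed_sub _ Av)).2 rank_rV v_neq0 rank_L.
have /sub_rVP [c wc] := submx_trans (fixed_sub _ Aw) L_sub_v.
have c1 : c = 1.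
  rewrite -w_sum -[c]mulr1 -v_sum mulr_sumr; apply: eq_bigr => i _.
  by have := congr1 (fun M : 'rV_n => M 0 i) wc; rewrite !mxE => ->.
by apply: trmx_inj; rewrite wc c1 scale1r.
Qed.

End UnitRowSum.

Lemma harm_sub1 m : (2 <= m)%N ->
  harm m - 1 = 2^-1 + \sum_(3 <= k < m.+1) (k%:R : algC)^-1.
Proof.
move=> m_ge2; rewrite /harm big_ltn; last lia.
rewrite big_ltn; last lia.
by rewrite invr1 addrAC subrr add0r.
Qed.

Lemma harm_sub1_neq0 m : (2 <= m)%N -> harm m - 1 != 0.
Proof.
move=> m_ge2; rewrite harm_sub1 // gt_eqF //.
have T_ge0 : 0 <= \sum_(3 <= k < m.+1) (k%:R : algC)^-1.
  by apply: sumr_ge0 => k _; rewrite invr_ge0 ler0n.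
by rewrite ltr_wpDr // invr_gt0 ltr0n.
Qed.

Lemma urnv_entry_le m r : (r <= m)%N ->
  urnv_entry m r = ((m * (m + 1))%N%:R * (harm m - 1))^-1 * r%:R.
Proof. by move=> r_le; rewrite /urnv_entry r_le. Qed.

Lemma urnv_entry_gt m r : (m < r)%N ->
  urnv_entry m r = ((m * (m + 1))%N%:R * (harm m - 1))^-1 *
                   ((m * (m + 1))%N%:R / (r - m + 2)%N%:R).
Proof. by move=> r_gt; rewrite /urnv_entry leqNgt r_gt. Qed.

Ltac urnA_entry_cases :=
  rewrite /urnA_entry; repeat case: ifPn => ?; try (exfalso; lia); try done;
  try (by congr (- _); congr (_%:R); lia); try (by congr (_%:R); lia);
  try (by repeat match goal with H : is_true (_ == _) |- _ => move/eqP: H => H end;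
          subst).

Section LargeUrn.
Variable m : nat.
Hypothesis m_ge3 : (3 <= m)%N.
Local Notation E := (urnA_entry m).
Local Notation n := (2 * m - 2)%N.

Lemma urnA_row1 (Y : nat -> algC) :
  \sum_(1 <= c < n.+1) E 1 c * Y c = - Y 1%N + 2 * Y m.+1.
Proof.
rewrite (big_nat_sparse2 1 m.+1); try (apply/eqP; lia); try lia.
  by rewrite -[- Y 1%N]mulN1r; congr (_ * _ + _ * _); urnA_entry_cases.
by move=> c *; rewrite (_ : E 1 c = 0) ?mul0r //; urnA_entry_cases.
Qed.

Lemma urnA_row_lo (Y : nat -> algC) s : (0 < s < m)%N ->
  \sum_(1 <= c < n.+1) E s.+1 c * Y c =
  - s.+1%:R * Y s.+1 + s%:R * Y s + 2 * Y m.+1.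
Proof.
move=> s_range.
rewrite (big_nat_sparse3 s.+1 s m.+1); try (apply/eqP; lia); try lia.
  by congr (_ * _ + _ * _ + _ * _); urnA_entry_cases.
by move=> c *; rewrite (_ : E s.+1 c = 0) ?mul0r //; urnA_entry_cases.
Qed.

Lemma urnA_row_hi (Y : nat -> algC) j : (0 < j)%N -> (j + 3 <= m)%N ->
  \sum_(1 <= c < n.+1) E (m + j)%N c * Y c =
  - j.+1%:R * Y (m + j)%N + j.+2%:R * Y (m + j.+1)%N.
Proof.
move=> j_gt0 j_le.
rewrite (big_nat_sparse2 (m + j)%N (m + j.+1)%N); try (apply/eqP; lia); try lia.
  by congr (_ * _ + _ * _); urnA_entry_cases.
by move=> c *; rewrite (_ : E (m + j)%N c = 0) ?mul0r //; urnA_entry_cases.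
Qed.

Lemma urnA_row_last (Y : nat -> algC) :
  \sum_(1 <= c < n.+1) E n c * Y c = - (m - 1)%N%:R * Y n + m%:R * Y m.
Proof.
rewrite (big_nat_sparse2 n m); try (apply/eqP; lia); try lia.
  by congr (_ * _ + _ * _); urnA_entry_cases.
by move=> c *; rewrite (_ : E n c = 0) ?mul0r //; urnA_entry_cases.
Qed.

Lemma urnA_col_lo (V : nat -> algC) c : (0 < c < m)%N ->
  \sum_(1 <= r < n.+1) E r c * V r = - c%:R * V c + c%:R * V c.+1.
Proof.
move=> c_range; rewrite (big_nat_sparse2 c c.+1); try (apply/eqP; lia); try lia.
  by congr (_ * _ + _ * _); urnA_entry_cases.
by move=> r *; rewrite (_ : E r c = 0) ?mul0r //; urnA_entry_cases.
Qed.

Lemma urnA_col_m (V : nat -> algC) :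
  \sum_(1 <= r < n.+1) E r m * V r = - m%:R * V m + m%:R * V n.
Proof.
rewrite (big_nat_sparse2 m n); try (apply/eqP; lia); try lia.
  by congr (_ * _ + _ * _); urnA_entry_cases.
by move=> r *; rewrite (_ : E r m = 0) ?mul0r //; urnA_entry_cases.
Qed.

Lemma urnA_col_succm (V : nat -> algC) :
  \sum_(1 <= r < n.+1) E r m.+1 * V r =
  \sum_(1 <= r < m.+1) 2 * V r - 2 * V m.+1.
Proof.
rewrite (big_cat_nat (n := m.+1)) ?(big_ltn (m := m.+1)) /=; try lia.
rewrite [X in _ + (_ + X)]big1_seq ?addr0; last first.
  move=> r /andP [_]; rewrite mem_index_iota => r_range.
  by rewrite (_ : E r m.+1 = 0) ?mul0r //; urnA_entry_cases.
rewrite -mulNr; congr (_ + _ * _); last by urnA_entry_cases.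
apply: eq_big_nat => r r_range; congr (_ * _); urnA_entry_cases.
Qed.

Lemma urnA_col_hi (V : nat -> algC) j : (0 < j)%N -> (j + 3 <= m)%N ->
  \sum_(1 <= r < n.+1) E r (m + j.+1)%N * V r =
  j.+2%:R * V (m + j)%N - j.+2%:R * V (m + j.+1)%N.
Proof.
move=> j_gt0 j_le.
rewrite (big_nat_sparse2 (m + j)%N (m + j.+1)%N); try (apply/eqP; lia); try lia.
  by rewrite -mulNr; congr (_ * _ + _ * _); urnA_entry_cases.
by move=> r *; rewrite (_ : E r (m + j.+1)%N = 0) ?mul0r //; urnA_entry_cases.
Qed.

Lemma urnA_row_sum_large r : (0 < r <= n)%N -> \sum_(1 <= c < n.+1) E r c = 1.
Proof.
move=> r_range; under eq_bigr do rewrite -[E r _]mulr1.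
have [->|r_neq1] := eqVneq r 1%N; first by rewrite (urnA_row1 (fun=> 1)); ring.
have [r_le_m|r_gt_m] := leqP r m.
  have -> : r = r.-1.+1 by lia.
  by rewrite (urnA_row_lo (fun=> 1)); [ring | lia].
have [->|r_neq_n] := eqVneq r n.
  by rewrite (urnA_row_last (fun=> 1)) natrB; [ring | lia].
have -> : r = (m + (r - m))%N by lia.
by rewrite (urnA_row_hi (fun=> 1)); try lia; ring.
Qed.

Lemma urnA_fixed_const_large (Y : nat -> algC) :
  (forall r, (0 < r <= n)%N -> \sum_(1 <= c < n.+1) E r c * Y c = Y r) ->
  forall c, (0 < c <= n)%N -> Y c = Y 1%N.
Proof.
move=> AY.
have Y_succm : Y m.+1 = Y 1%N.
  have := AY 1%N ltac:(lia); rewrite urnA_row1 => /(@eq_of_scaled_residual _ (-2)).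
  by apply; [rewrite oppr_eq0 pnatr_eq0 | ring].
have Y_lo s : (s < m)%N -> Y s.+1 = Y 1%N.
  elim: s => // s IH s_lt; have := AY s.+2 ltac:(lia).
  rewrite urnA_row_lo ?IH ?Y_succm; try lia.
  by move=> /(@eq_of_scaled_residual _ (s.+3%:R)); apply; [rewrite pnatr_eq0 | ring].
have Y_hi j : (j + 3 <= m)%N -> Y (m + j.+1)%N = Y 1%N.
  elim: j => [|j IH] j_le; first by rewrite addn1.
  have := AY (m + j.+1)%N ltac:(lia).
  rewrite urnA_row_hi ?IH; try lia.
  move=> /(@eq_of_scaled_residual _ (- j.+3%:R)).
  by apply; [rewrite oppr_eq0 pnatr_eq0 | ring].
move=> c c_range; have [c_le_m|c_gt_m] := leqP c m.
  have -> : c = c.-1.+1 by lia.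
  by rewrite Y_lo //; lia.
have -> : c = (m + (c - m).-1.+1)%N by lia.
by rewrite Y_hi //; lia.
Qed.

Local Notation M := ((m * (m + 1))%N%:R : algC).
Local Notation K := ((M * (harm m - 1))^-1).

Lemma urnv_fixed_large c : (0 < c <= n)%N ->
  \sum_(1 <= r < n.+1) E r c * urnv_entry m r = urnv_entry m c.
Proof.
move=> c_range; have H_neq0 := @harm_sub1_neq0 m ltac:(lia).
have [c_lt_m|c_ge_m] := ltnP c m.
  by rewrite urnA_col_lo ?urnv_entry_le //; try lia; ring.
have [->|c_neq_m] := eqVneq c m.
  rewrite urnA_col_m urnv_entry_le ?urnv_entry_gt //; try lia.
  rewrite (_ : (n - m + 2 = m)%N); last lia.
  by field; rewrite H_neq0 ?natr1 -?natrD !pnatr_eq0; lia.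
have [->|c_neq_succm] := eqVneq c m.+1.
  rewrite urnA_col_succm urnv_entry_gt // (_ : (m.+1 - m + 2 = 3)%N); last lia.
  rewrite (eq_big_nat _ _ (F2 := fun r => K * (2 * r%:R))) => [|r r_range]; last first.
    by rewrite urnv_entry_le; [ring | lia].
  rewrite -!mulr_sumr natr_triangular_sum ?pnatr_eq0 // -addn1.
  by field; rewrite H_neq0 ?natr1 -?natrD !pnatr_eq0; lia.
have -> : c = (m + (c - m).-1.+1)%N by lia.
set j := (c - m).-1; have j_gt0 : (0 < j)%N by lia.
rewrite urnA_col_hi ?urnv_entry_gt; try lia.
rewrite (_ : (m + j - m + 2 = j.+2)%N); last lia.
rewrite (_ : (m + j.+1 - m + 2 = j.+3)%N); last lia.
by field; rewrite H_neq0 ?natr1 -?natrD !pnatr_eq0; lia.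
Qed.

Lemma urnv_sum_large : \sum_(1 <= r < n.+1) urnv_entry m r = 1.
Proof.
have lo : \sum_(1 <= r < m.+1) urnv_entry m r = K * (M / 2).
  rewrite (eq_big_nat _ _ (F2 := fun r => K * r%:R)) => [|r r_range]; last first.
    by rewrite urnv_entry_le //; lia.
  by rewrite -mulr_sumr natr_triangular_sum ?pnatr_eq0 // addn1.
have hi : \sum_(m.+1 <= r < n.+1) urnv_entry m r =
          K * M * \sum_(3 <= k < m.+1) k%:R^-1.
  rewrite -{1}(_ : (3 + (m - 2) = m.+1)%N); last lia.
  rewrite big_addn (_ : (n.+1 - (m - 2) = m.+1)%N); last lia.
  rewrite mulr_sumr; apply: eq_big_nat => k k_range.
  rewrite urnv_entry_gt; last lia.
  by rewrite (_ : (k + (m - 2) - m + 2 = k)%N) ?mulrA //; lia.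
have M_neq0 : M != 0 by rewrite pnatr_eq0 muln_eq0; apply/norP; split; lia.
have H_neq0 := @harm_sub1_neq0 m ltac:(lia).
rewrite (big_cat_nat (n := m.+1)) /= ?lo ?hi; try lia.
set k := K; transitivity (k * (M * (harm m - 1))); last by rewrite mulVf ?mulf_neq0.
by rewrite harm_sub1; [ring | lia].
Qed.

End LargeUrn.

Section Urn.
Variable m : nat.
Local Notation n := (2 * m - 2)%N.

Lemma urnA_real i j : urnA m i j \is Num.real.
Proof.
by rewrite mxE /urnA_entry; repeat case: ifP => _; rewrite ?realN ?realn ?rpred0 ?rpred1.
Qed.

Lemma urnA_offdiag_ge0 i j : i != j -> 0 <= urnA m i j.
Proof.
move=> ij; have {}ij : nat_of_ord i != j by [].
rewrite mxE /urnA_entry.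
by repeat case: ifPn => ?; rewrite ?ler0n //; exfalso; lia.
Qed.

Hypothesis m_ge2 : (2 <= m)%N.

Lemma urnA_row_sum i : \sum_j urnA m i j = 1.
Proof.
rewrite (eq_bigr (fun j : 'I_n => urnA_entry m i.+1 j.+1)) => [|j _]; last by rewrite mxE.
rewrite big_ord_succ; have i_lt := ltn_ord i.
have [m_gt2|m_le2] := ltnP 2 m; first by apply: urnA_row_sum_large; lia.
move: (nat_of_ord i) i_lt; have -> : m = 2%N by lia.
by move=> [|[|//]] _; rewrite big_nat_two /urnA_entry /=; ring.
Qed.

Lemma urnA_fixed_const (x : 'cV[algC]_n) :
  urnA m *m x = x -> forall i j, x i 0 = x j 0.
Proof.
move=> Ax.
(* [Y] reads [x] with the 1-based indices of [urnA_entry]; [Y 0] is junk. *)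
pose Y c : algC := if insub c.-1 is Some j then x j 0 else 0.
have Y_x (i : 'I_n) : Y i.+1 = x i 0 by rewrite /Y /= valK.
have AY r : (0 < r <= n)%N -> \sum_(1 <= c < n.+1) urnA_entry m r c * Y c = Y r.
  case: r => [//|k] k_range; have k_lt : (k < n)%N by lia.
  rewrite -big_ord_succ (Y_x (Ordinal k_lt)) -Ax mxE.
  by apply: eq_bigr => j _; rewrite mxE Y_x.
suff Y_const c : (0 < c <= n)%N -> Y c = Y 1%N.
  by move=> i j; rewrite -!Y_x !Y_const //; [have := ltn_ord j | have := ltn_ord i]; lia.
have [m_gt2|m_le2] := ltnP 2 m; first exact: urnA_fixed_const_large.
move: AY; have -> : m = 2%N by lia.
move=> AY; have := AY 1%N isT; rewrite big_nat_two /urnA_entry /= => row1.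
have Y2 : Y 2%N = Y 1%N.
  by apply: (@eq_of_scaled_residual _ (-2) _ _ _ _ row1); [rewrite oppr_eq0 pnatr_eq0 | ring].
by case: c => [|[|[|//]]].
Qed.

Lemma urnv_sum : \sum_i urnv m i 0 = 1.
Proof.
rewrite (eq_bigr (fun i : 'I_n => urnv_entry m i.+1)) => [|i _]; last by rewrite mxE.
rewrite big_ord_succ; have [m_gt2|m_le2] := ltnP 2 m; first exact: urnv_sum_large.
have -> : m = 2%N by lia.
by rewrite big_nat_two /urnv_entry /= harm_sub1 // big_geq //; field.
Qed.

Lemma urnA_trmx_urnv : (urnA m)^T *m urnv m = urnv m.
Proof.
apply/colP => i; rewrite !mxE.
rewrite (eq_bigr (fun r : 'I_n => urnA_entry m r.+1 i.+1 * urnv_entry m r.+1)) => [|r _];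
  last by rewrite !mxE.
rewrite (big_ord_succ _ _ (fun r => urnA_entry m r i.+1 * urnv_entry m r)).
have i_lt := ltn_ord i.
have [m_gt2|m_le2] := ltnP 2 m; first by apply: urnv_fixed_large; lia.
move: (nat_of_ord i) i_lt; have -> : m = 2%N by lia.
move=> [|[|//]] _; rewrite big_nat_two /urnA_entry /urnv_entry /= harm_sub1 // big_geq //;
  by field.
Qed.

End Urn.

Theorem lemma1 (m : nat) (hm : (2 <= m)%N) :
  [/\ (urnA m)^T *m urnv m = urnv m,
      \sum_i urnv m i 0 = 1,
      eigenvalue (urnA m)^T 1
        /\ (forall lambda : algC, eigenvalue (urnA m)^T lambda ->
              lambda != 1 -> 'Re lambda < 1),
      \rank (eigenspace (urnA m)^T 1) = 1%N
    & forall w : 'cV[algC]_(2 * m - 2),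
        (urnA m)^T *m w = w -> \sum_i w i 0 = 1 -> w = urnv m].
Proof.
have n_gt0 : (0 < 2 * m - 2)%N by lia.
have row_sum := @urnA_row_sum m hm; have fixed_const := @urnA_fixed_const m hm.
have rank1 := rank_eigenspace_trmx1 row_sum n_gt0 fixed_const.
split.
- exact: urnA_trmx_urnv.
- exact: urnv_sum.
- split; first by rewrite /eigenvalue -mxrank_eq0 rank1.
  exact: eigenvalue_trmx_Re_lt1 (urnA_real m) (@urnA_offdiag_ge0 m) row_sum.
- exact: rank1.
- move=> w Aw w_sum.
  exact: trmx_fixed_sum1_unique row_sum n_gt0 fixed_const _ _ (urnA_trmx_urnv m hm) Aw
    (urnv_sum m hm) w_sum.
Qed.
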